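(* Under the standing assumptions below, for every $s\in I_{\mathcal{C}}$, $$\frac{\partial F_{2n}}{\partial\lambda}(s,1)=\sum_{i=0}^{2n-1}\frac{t(s_i,\theta_i)}{\cos\theta_0}\,\frac{d\theta_0}{d\lambda}\Big|_{\lambda=1}+\sum_{k=1}^{2n-1}(-1)^k\theta_k\sum_{i=k}^{2n-1}\frac{t(s_i,\theta_i)}{\cos\theta_0},$$ where $s_0=s$, $s_k=F_k(s,1)$ and $\theta_k=\hat\theta_k$.
   Context: Let $P$ be a simply connected polygon with $d$ sides labeled $1,\dots,d$, $\partial P$ oriented anticlockwise, and let $\Phi$ be its billiard map, written in coordinates $(s,\theta)$ ($s$ the arc-length parameter on $\partial P$, $\theta\in(-\pi/2,\pi/2)$ the oriented angle from the inward normal). $\beta_{i,j}$ is $\pi$ minus the angle formed by the oriented sides $i$ and $j$, so that the angle after a collision from side $i$ to side $j$ is $\beta_{i,j}-\theta$. For $\lambda>0$, $R_\lambda(s,\theta)=(s,\lambda\theta)$. Let $\ell_i$ be the line supporting side $i$ and $x_i$ its arc-length parametrization extending that of side $i$. For distinct sides $i,j$, $\Phi_{i,j}(s,\theta):=(s',\beta_{i,j}-\theta)$, where $x_j(s')$ is the intersection with $\ell_j$ of the line through $x_i(s)$ whose direction makes angle $\theta$ with the inward normal of side $i$ (defined when $|\beta_{i,j}-\theta|<\pi/2$; it agrees with $\Phi$ for genuine collisions from side $i$ to side $j$). $t(s,\theta)$ denotes the oriented length of the segment joining $x_i(s)$ and $x_j(s')$ along this oriented line. Standing assumptions: $\mathcal{C}$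 is a periodic cylinder of $\Phi$ (maximal family of parallel periodic orbits with common itinerary) of even period $2n>2$ with itinerary $i_0,\dots,i_{2n-1}$ (indices mod $2n$) and collision angles $\hat\theta_0,\dots,\hat\theta_{2n-1}$, with $\hat\theta_0=\frac{1}{2n}\sum_{k=0}^{2n-1}(-1)^{k+1}k\beta_{i_k,i_{k+1}}$. Define $\theta_0(\lambda):=\frac{1}{\lambda^{2n}-1}\sum_{k=0}^{2n-1}(-\lambda)^{2n-k}\beta_{i_k,i_{k+1}}$ (extended analytically to $\lambda=1$ by $\hat\theta_0$), $\theta_k(\lambda):=\lambda(\beta_{i_{k-1},i_k}-\theta_{k-1}(\lambda))$ for $k=1,\dots,2n$; fix $\delta>0$ with all $\theta_k(\lambda)\in(-\pi/2,\pi/2)$ for $\lambda\in(1-\delta,1+\delta)$, and set $F_k(s,\lambda):=\pi_1\circ R_\lambda\circ\Phi_{i_{k-1},i_k}\circ\cdots\circ R_\lambda\circ\Phi_{i_0,i_1}(s,\theta_0(\lambda))$, $\pi_1(s,\theta)=s$. The base $I_{\mathcal{C}}$ is the (open interval) set of $s$ such that $(s,\hat\theta_0)$ is a periodic point of $\Phi$ with the itinerary of $\mathcal{C}$. In $t(s_i,\theta_i)$ the sides are $i_i$ and $i_{i+1}$. *)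

From Stdlib Require Import Reals Lra Lia List.
Import ListNotations.
Open Scope R_scope.

Definition pt : Type := (R * R)%type.
Definition vadd (p q : pt) : pt := (fst p + fst q, snd p + snd q).
Definition vsub (p q : pt) : pt := (fst p - fst q, snd p - snd q).
Definition vscal (a : R) (p : pt) : pt := (a * fst p, a * snd p).
Definition dot (p q : pt) : R := fst p * fst q + snd p * snd q.
Definition det (p q : pt) : R := fst p * snd q - snd p * fst q.
Definition vnorm (p : pt) : R := sqrt (dot p p).

Definition rsum (a b : nat) (f : nat -> R) : R :=
  fold_right Rplus 0 (map f (seq a (b - a))).

(** Side i (0 <= i < d) is the oriented segment from vertex i
    to vertex i+1.  Sides are labelled 0..d-1 instead of 1..d. *)
Definition vert (d : nat) (v : nat -> pt) (i : nat) : pt := v (Nat.modulo i d).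
Definition side_vec d v i : pt := vsub (vert d v (S i)) (vert d v i).
Definition side_len d v i : R := vnorm (side_vec d v i).
Definition unit_dir d v i : pt := vscal (/ side_len d v i) (side_vec d v i).
(** inward unit normal (left normal, boundary oriented anticlockwise) *)
Definition in_normal d v i : pt :=
  let u := unit_dir d v i in (- snd u, fst u).

Definition on_segment (a b p : pt) : Prop :=
  exists tau, 0 <= tau <= 1 /\ p = vadd a (vscal tau (vsub b a)).

(** Simple (simply connected) polygon with boundary oriented anticlockwise:
    nondegenerate sides, non-adjacent sides disjoint, adjacent sides meeting
    only at their common vertex, positive signed area. *)
Definition simple_ccw_polygon (d : nat) (v : nat -> pt) : Prop :=
  (3 <= d)%nat /\
  (forall i, (i < d)%nat -> vert d v i <> vert d v (S i)) /\
  (forall i j p, (i < d)%nat -> (j < d)%nat -> i <> j ->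
     on_segment (vert d v i) (vert d v (S i)) p ->
     on_segment (vert d v j) (vert d v (S j)) p ->
     (j = Nat.modulo (S i) d /\ p = vert d v (S i)) \/
     (i = Nat.modulo (S j) d /\ p = vert d v (S j))) /\
  0 < rsum 0 d (fun i => det (vert d v i) (vert d v (S i))).

Definition on_boundary (d : nat) (v : nat -> pt) (p : pt) : Prop :=
  exists i, (i < d)%nat /\ on_segment (vert d v i) (vert d v (S i)) p.

(** Arc-length parameter: side i corresponds to s in [arc_start i, arc_start (i+1)]. *)
Definition arc_start d v (i : nat) : R := rsum 0 i (fun m => side_len d v m).

(** x_i : arc-length parametrisation of the line l_i extending that of side i *)
Definition xline d v (i : nat) (s : R) : pt :=
  vadd (vert d v i) (vscal (s - arc_start d v i) (unit_dir d v i)).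

(** Convention (forced by the definition of beta and Phi_{i,j} below):
    theta > 0 tilts the direction towards the orientation of the side. *)
Definition ray_dir d v (i : nat) (theta : R) : pt :=
  vadd (vscal (cos theta) (in_normal d v i)) (vscal (sin theta) (unit_dir d v i)).

(** beta_{i,j} = pi - (oriented angle from side i to side j),
    representative in (-pi, pi]: cos beta = - u_i.u_j, sin beta = det(u_i,u_j). *)
Definition beta d v (i j : nat) : R :=
  let c := - dot (unit_dir d v i) (unit_dir d v j) in
  if Rle_dec 0 (det (unit_dir d v i) (unit_dir d v j)) then acos c else - acos c.

(** t(s,theta): oriented length from x_i(s) to the intersection with l_j *)
Definition tlen d v (i j : nat) (s theta : R) : R :=
  det (vsub (vert d v j) (xline d v i s)) (unit_dir d v j) /
  det (ray_dir d v i theta) (unit_dir d v j).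

Definition Phi_ij d v (i j : nat) (st : R * R) : R * R :=
  let s := fst st in let theta := snd st in
  let q := vadd (xline d v i s) (vscal (tlen d v i j s theta) (ray_dir d v i theta)) in
  (arc_start d v j + dot (vsub q (vert d v j)) (unit_dir d v j), beta d v i j - theta).

Definition R_lam (lam : R) (st : R * R) : R * R := (fst st, lam * snd st).

Definition genuine_step d v (i j : nat) (st : R * R) : Prop :=
  let s := fst st in let theta := snd st in
  (i < d)%nat /\ (j < d)%nat /\ i <> j /\
  arc_start d v i < s < arc_start d v (S i) /\
  - (PI / 2) < theta < PI / 2 /\
  - (PI / 2) < beta d v i j - theta < PI / 2 /\
  0 < tlen d v i j s theta /\
  arc_start d v j < fst (Phi_ij d v i j st) < arc_start d v (S j) /\
  (forall tau, 0 < tau < tlen d v i j s theta ->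
     ~ on_boundary d v (vadd (xline d v i s) (vscal tau (ray_dir d v i theta)))).

Definition itI (n : nat) (itin : nat -> nat) (k : nat) : nat :=
  itin (Nat.modulo k (2 * n)).

Definition betaI d v n itin (k : nat) : R :=
  beta d v (itI n itin k) (itI n itin (S k)).

Definition theta0hat d v n itin : R :=
  / INR (2 * n) * rsum 0 (2 * n) (fun k => (-1) ^ (S k) * INR k * betaI d v n itin k).

Definition theta0 d v n itin (lam : R) : R :=
  if Req_dec_T lam 1 then theta0hat d v n itin
  else / (lam ^ (2 * n) - 1) *
       rsum 0 (2 * n) (fun k => (- lam) ^ (2 * n - k) * betaI d v n itin k).

Fixpoint state d v n itin (lam s : R) (k : nat) : R * R :=
  match k with
  | O => (s, theta0 d v n itin lam)
  | S m => R_lam lam (Phi_ij d v (itI n itin m) (itI n itin (S m))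
                                 (state d v n itin lam s m))
  end.

Definition F d v n itin (k : nat) (s lam : R) : R := fst (state d v n itin lam s k).

(* Differentiating [s_(k+1) = Phi(s_k, th_k)], [th_(k+1) = lam (beta_k - th_k)] at [lam = 1]
   gives the billiard differential [cos th_(k+1) s'_(k+1) = - cos th_k s'_k - t_k th'_k] and
   [th'_(k+1) = th_(k+1) - th'_k].  With alternating signs both recursions telescope:
   [(-1)^k th'_k = th_0'(1) + sum_(1 <= j <= k) (-1)^j th_j] and
   [(-1)^k cos th_k s'_k = sum_(i < k) (-1)^i t_i th'_i].  At [k = 2n] periodicity gives
   [cos th_(2n) = cos th_0], and exchanging the double sum yields the formula.  Periodicity of the
   angles also forces [sum_k (-1)^k beta_k = 0], which makes [theta0] a quotient of polynomials
   with no singularity at [lam = 1]. *)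

From Stdlib Require Import Reals Lra Lia List.
Open Scope R_scope.

Lemma rsum_nil a b f : (b <= a)%nat -> rsum a b f = 0.
Proof. intros H; unfold rsum; replace (b - a)%nat with 0%nat by lia; reflexivity. Qed.

Lemma rsum_S a b f : (a <= b)%nat -> rsum a (S b) f = rsum a b f + f b.
Proof.
  intros H; unfold rsum.
  replace (S b - a)%nat with (S (b - a)) by lia.
  rewrite seq_S, map_app, fold_right_app; cbn.
  replace (a + (b - a))%nat with b by lia.
  induction (map f (seq a (b - a))) as [|x l IH]; cbn; [ring | rewrite IH; ring].
Qed.

Lemma rsum_ext_in a b f g :
  (forall k, (a <= k < b)%nat -> f k = g k) -> rsum a b f = rsum a b g.
Proof.
  intros H; unfold rsum; f_equal; apply map_ext_in.
  intros k Hk; apply in_seq in Hk; apply H; lia.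
Qed.

Lemma rsum_plus a b f g : rsum a b (fun k => f k + g k) = rsum a b f + rsum a b g.
Proof. unfold rsum; induction (seq a (b - a)); cbn; [ring | rewrite IHl; ring]. Qed.

Lemma rsum_mult_r a b f c : rsum a b (fun k => f k * c) = rsum a b f * c.
Proof. unfold rsum; induction (seq a (b - a)); cbn; [ring | rewrite IHl; ring]. Qed.

Lemma rsum_mult_l a b f c : rsum a b (fun k => c * f k) = c * rsum a b f.
Proof. unfold rsum; induction (seq a (b - a)); cbn; [ring | rewrite IHl; ring]. Qed.

Lemma rsum_triangle_swap (t a : nat -> R) N :
  rsum 0 N (fun i => t i * rsum 1 (S i) a) = rsum 1 N (fun k => a k * rsum k N t).
Proof.
  induction N as [|N IH]; [now rewrite !rsum_nil by lia|].
  rewrite rsum_S, IH by lia.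
  destruct N as [|N]; [rewrite !rsum_nil by lia; ring|].
  rewrite (rsum_ext_in 1 (S (S N)) (fun k => a k * rsum k (S (S N)) t)
             (fun k => a k * rsum k (S N) t + a k * t (S N))).
  2:{ intros k Hk. rewrite rsum_S by lia. ring. }
  rewrite rsum_plus, rsum_mult_r, (rsum_S 1 (S N) (fun k => a k * rsum k (S N) t)),
    (rsum_nil (S N) (S N)) by lia.
  ring.
Qed.

Lemma pow_neg1_mul_self k : (-1) ^ k * (-1) ^ k = 1.
Proof. rewrite <- pow_add; replace (k + k)%nat with (2 * k)%nat by lia; apply pow_1_even. Qed.

Lemma pow_neg1_even_sub N k : (k <= 2 * N)%nat -> (-1) ^ (2 * N - k) = (-1) ^ k.
Proof.
  intros Hk.
  rewrite <- (Rmult_1_r ((-1) ^ (2 * N - k))), <- (pow_neg1_mul_self k), <- Rmult_assoc,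
    <- pow_add, Nat.sub_add, pow_1_even by lia.
  ring.
Qed.

Notation dpl := derivable_pt_lim.

(* The Stdlib rules, restated on pointwise [fun l => ...] shapes so that [eapply]
   can match them against unfolded geometric expressions. *)
Lemma dpl_eq f x l l' : dpl f x l -> l = l' -> dpl f x l'.
Proof. now intros H <-. Qed.

Lemma dpl_const c x : dpl (fun _ => c) x 0.
Proof. apply derivable_pt_lim_const. Qed.

Lemma dpl_plus f g x a b : dpl f x a -> dpl g x b -> dpl (fun l => f l + g l) x (a + b).
Proof. apply derivable_pt_lim_plus. Qed.

Lemma dpl_minus f g x a b : dpl f x a -> dpl g x b -> dpl (fun l => f l - g l) x (a - b).
Proof. apply derivable_pt_lim_minus. Qed.

Lemma dpl_opp f x a : dpl f x a -> dpl (fun l => - f l) x (- a).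
Proof. apply derivable_pt_lim_opp. Qed.

Lemma dpl_mult f g x a b :
  dpl f x a -> dpl g x b -> dpl (fun l => f l * g l) x (a * g x + f x * b).
Proof. apply derivable_pt_lim_mult. Qed.

Lemma dpl_div f g x a b : dpl f x a -> dpl g x b -> g x <> 0 ->
  dpl (fun l => f l / g l) x ((a * g x - b * f x) / (g x)²).
Proof. apply derivable_pt_lim_div. Qed.

Lemma dpl_cos f x a : dpl f x a -> dpl (fun l => cos (f l)) x (- sin (f x) * a).
Proof. intros H; apply (derivable_pt_lim_comp f cos); [exact H | apply derivable_pt_lim_cos]. Qed.

Lemma dpl_sin f x a : dpl f x a -> dpl (fun l => sin (f l)) x (cos (f x) * a).
Proof. intros H; apply (derivable_pt_lim_comp f sin); [exact H | apply derivable_pt_lim_sin]. Qed.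

Lemma dpl_rsum a b (f : nat -> R -> R) x :
  (forall k, exists L, dpl (f k) x L) -> exists L, dpl (fun l => rsum a b (fun k => f k l)) x L.
Proof.
  intros H; unfold rsum; induction (seq a (b - a)) as [|k ks [L1 H1]].
  - exists 0; exact (dpl_const 0 x).
  - destruct (H k) as [L2 H2]; exists (L2 + L1); cbn; now apply dpl_plus.
Qed.

Definition vdpl (P : R -> pt) x (dP : pt) : Prop :=
  dpl (fun l => fst (P l)) x (fst dP) /\ dpl (fun l => snd (P l)) x (snd dP).

Lemma vdpl_const (c : pt) x : vdpl (fun _ => c) x (0, 0).
Proof. split; apply dpl_const. Qed.

Lemma vdpl_add P Q x a b :
  vdpl P x a -> vdpl Q x b -> vdpl (fun l => vadd (P l) (Q l)) x (vadd a b).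
Proof. intros [] []; split; now apply dpl_plus. Qed.

Lemma vdpl_sub P Q x a b :
  vdpl P x a -> vdpl Q x b -> vdpl (fun l => vsub (P l) (Q l)) x (vsub a b).
Proof. intros [] []; split; now apply dpl_minus. Qed.

Lemma vdpl_scal f P x a b : dpl f x a -> vdpl P x b ->
  vdpl (fun l => vscal (f l) (P l)) x (vadd (vscal a (P x)) (vscal (f x) b)).
Proof. intros ? []; split; now apply dpl_mult. Qed.

Lemma dpl_dot P Q x a b : vdpl P x a -> vdpl Q x b ->
  dpl (fun l => dot (P l) (Q l)) x (dot a (Q x) + dot (P x) b).
Proof.
  intros [] []; unfold dot; eapply dpl_eq; [apply dpl_plus; apply dpl_mult; eassumption|].
  cbn; ring.
Qed.

Lemma dpl_det P Q x a b : vdpl P x a -> vdpl Q x b ->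
  dpl (fun l => det (P l) (Q l)) x (det a (Q x) + det (P x) b).
Proof.
  intros [] []; unfold det; eapply dpl_eq; [apply dpl_minus; apply dpl_mult; eassumption|].
  cbn; ring.
Qed.

Ltac dpl_step := first
  [ eassumption
  | apply dpl_const | apply vdpl_const
  | eapply dpl_div | eapply dpl_plus | eapply dpl_minus | eapply dpl_mult | eapply dpl_opp
  | eapply dpl_cos | eapply dpl_sin
  | eapply vdpl_add | eapply vdpl_sub | eapply vdpl_scal | eapply dpl_dot | eapply dpl_det ].

Lemma unit_dir_unit d v i :
  vert d v i <> vert d v (S i) -> dot (unit_dir d v i) (unit_dir d v i) = 1.
Proof.
  intros Hne; unfold unit_dir, side_len, vnorm, side_vec.
  destruct (vert d v (S i)) as [a b], (vert d v i) as [c e].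
  unfold vsub, vscal, dot; cbn [fst snd].
  set (N := (a - c) * (a - c) + (b - e) * (b - e)).
  assert (HN : 0 < N).
  { assert (0 <= N) by (apply Rplus_le_le_0_compat; apply Rle_0_sqr).
    destruct (Req_dec N 0) as [H0|]; [|lra].
    destruct (Rplus_sqr_eq_0 (a - c) (b - e) H0); exfalso; apply Hne; f_equal; lra. }
  pose proof (sqrt_sqrt N (Rlt_le _ _ HN)); pose proof (sqrt_lt_R0 N HN).
  transitivity (((a - c) * (a - c) + (b - e) * (b - e)) / (sqrt N * sqrt N)); [field; lra|].
  fold N; rewrite H; field; lra.
Qed.

Lemma det_ray_dir_unit_dir d v i j th :
  dot (unit_dir d v i) (unit_dir d v i) = 1 -> dot (unit_dir d v j) (unit_dir d v j) = 1 ->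
  det (ray_dir d v i th) (unit_dir d v j) = cos (beta d v i j - th).
Proof.
  intros Hi Hj; unfold beta, ray_dir, in_normal.
  destruct (unit_dir d v i) as [a b], (unit_dir d v j) as [c e].
  unfold vadd, vscal, det, dot in *; cbn [fst snd] in *.
  assert (Hid : (a*c+b*e)*(a*c+b*e) + (a*e-b*c)*(a*e-b*c) = 1).
  { transitivity ((a*a+b*b)*(c*c+e*e)); [ring|]. rewrite Hi, Hj; ring. }
  assert (Hc : -1 <= -(a*c+b*e) <= 1).
  { pose proof (Rle_0_sqr (a*e-b*c)); unfold Rsqr in *; split; nra. }
  assert (Hsq : sqrt (1 - (-(a*c+b*e))²) = Rabs (a*e-b*c)).
  { rewrite <- sqrt_Rsqr_abs; f_equal; unfold Rsqr; lra. }
  rewrite cos_minus.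
  destruct (Rle_dec 0 (a*e-b*c)).
  - rewrite cos_acos, sin_acos, Hsq, Rabs_pos_eq by auto; ring.
  - rewrite cos_neg, sin_neg, cos_acos, sin_acos, Hsq, Rabs_left by (auto; lra); ring.
Qed.

Lemma dpl_Phi_ij_fst d v i j (P : R -> R * R) x dS dTh :
  dot (unit_dir d v i) (unit_dir d v i) = 1 -> dot (unit_dir d v j) (unit_dir d v j) = 1 ->
  dpl (fun l => fst (P l)) x dS -> dpl (fun l => snd (P l)) x dTh ->
  cos (beta d v i j - snd (P x)) <> 0 ->
  dpl (fun l => fst (Phi_ij d v i j (P l))) x
    ((- cos (snd (P x)) * dS - tlen d v i j (fst (P x)) (snd (P x)) * dTh)
     / cos (beta d v i j - snd (P x))).
Proof.
  intros Hi Hj HS HTh.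
  rewrite <- det_ray_dir_unit_dir by assumption; intros Hden.
  eapply dpl_eq; [unfold Phi_ij, tlen, xline, ray_dir; cbn [fst snd]; repeat dpl_step|].
  pose proof (sin2_cos2 (snd (P x))) as Hsc; unfold Rsqr in Hsc.
  revert Hi Hj Hden Hsc; unfold tlen, xline, ray_dir, in_normal.
  generalize (unit_dir d v i) (unit_dir d v j) (vert d v i) (vert d v j)
    (sin (snd (P x))) (cos (snd (P x))) (fst (P x)).
  intros [a b] [c e] [p q] [r s] si co s0 Hi Hj Hden Hsc.
  unfold vadd, vsub, vscal, dot, det in *; cbn [fst snd] in *.
  match goal with |- _ = (- co * dS - ?T * dTh) / ?Den =>
    transitivity ((- co * ((a*a+b*b) * (c*c+e*e)) * dS
                   - T * ((si*si+co*co) * ((a*a+b*b) * (c*c+e*e))) * dTh) / Den) end.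
  - unfold Rsqr; field; exact Hden.
  - now rewrite Hi, Hj, Hsc, !Rmult_1_r.
Qed.

Definition geom_sum (m : nat) (l : R) : R := rsum 0 m (fun j => l ^ j).

Lemma geom_sum_mul m l : (l - 1) * geom_sum m l = l ^ m - 1.
Proof.
  unfold geom_sum; induction m as [|m IH]; [rewrite rsum_nil by lia; cbn; ring|].
  rewrite rsum_S, Rmult_plus_distr_l, IH by lia; cbn; ring.
Qed.

Lemma geom_sum_1 m : geom_sum m 1 = INR m.
Proof.
  unfold geom_sum; induction m as [|m IH]; [now rewrite rsum_nil by lia|].
  rewrite rsum_S, IH, pow1, S_INR by lia; ring.
Qed.

Lemma geom_sum_derivable m x : exists L, dpl (geom_sum m) x L.
Proof.
  apply (dpl_rsum 0 m (fun j l => l ^ j)); intros k.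
  eexists; apply derivable_pt_lim_pow.
Qed.

Section Theta0.
Variables (d : nat) (v : nat -> pt) (n : nat) (itin : nat -> nat).
Let N := (2 * n)%nat.
Let b := betaI d v n itin.

Hypothesis n_pos : (1 <= n)%nat.
Hypothesis alt_sum_beta : rsum 0 N (fun k => (-1) ^ k * b k) = 0.

(* By [alt_sum_beta] the numerator of [theta0] is [sum_k (-1)^k b k (l^(N-k) - 1)]; divide it
   and the denominator by [l - 1].  At [l = -1] both sides are [0], since [/ 0 = 0]. *)
Lemma theta0_geom_sum l :
  theta0 d v n itin l = rsum 0 N (fun k => (-1) ^ k * b k * geom_sum (N - k) l) / geom_sum N l.
Proof.
  assert (N_pos : 0 < INR N) by (apply lt_0_INR; unfold N; lia).
  unfold theta0; fold N b; destruct (Req_dec_T l 1) as [->|Hl].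
  - unfold theta0hat; fold N b.
    rewrite (rsum_ext_in 0 N (fun k => (-1) ^ k * b k * geom_sum (N - k) 1)
               (fun k => (-1) ^ k * b k * INR N + (-1) ^ (S k) * INR k * b k)).
    2:{ intros k Hk; rewrite geom_sum_1, minus_INR by lia; cbn; ring. }
    rewrite rsum_plus, rsum_mult_r, alt_sum_beta, geom_sum_1.
    field; lra.
  - rewrite (rsum_ext_in 0 N (fun k => (- l) ^ (N - k) * b k)
               (fun k => (l - 1) * ((-1) ^ k * b k * geom_sum (N - k) l) + (-1) ^ k * b k)).
    2:{ intros k Hk.
        replace (- l) with (-1 * l) by ring.
        rewrite Rpow_mult_distr; unfold N; rewrite pow_neg1_even_sub by lia; fold N.
        pose proof (geom_sum_mul (N - k) l); nra. }
    rewrite rsum_plus, alt_sum_beta, rsum_mult_l, <- (geom_sum_mul N l).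
    assert (l - 1 <> 0) by lra.
    rewrite Rinv_mult; unfold Rdiv.
    transitivity ((/ (l - 1) * (l - 1)) * (rsum 0 N (fun k => (-1) ^ k * b k * geom_sum (N - k) l)
                                           * / geom_sum N l)); [ring|].
    rewrite Rinv_l by assumption; ring.
Qed.

Lemma theta0_derivable : exists D, dpl (theta0 d v n itin) 1 D.
Proof.
  destruct (dpl_rsum 0 N (fun k l => (-1) ^ k * b k * geom_sum (N - k) l) 1) as [L1 H1].
  { intros k; destruct (geom_sum_derivable (N - k) 1) as [L HL].
    eexists; apply dpl_mult; [apply dpl_const | exact HL]. }
  destruct (geom_sum_derivable N 1) as [L2 H2].
  eexists; apply (derivable_pt_lim_ext
    (fun l => rsum 0 N (fun k => (-1) ^ k * b k * geom_sum (N - k) l) / geom_sum N l)).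
  { intros l; symmetry; apply theta0_geom_sum. }
  apply dpl_div; [exact H1 | exact H2 |].
  rewrite geom_sum_1; apply not_0_INR; unfold N; lia.
Qed.

End Theta0.

Section Orbit.
Variables (d : nat) (v : nat -> pt) (n : nat) (itin : nat -> nat) (s : R).

Let th k := snd (state d v n itin 1 s k).
Let tl k := tlen d v (itI n itin k) (itI n itin (S k)) (fst (state d v n itin 1 s k)) (th k).

Lemma orbit_angle_S k : th (S k) = betaI d v n itin k - th k.
Proof. unfold th, betaI; cbn [state R_lam snd]; unfold Phi_ij at 1; cbn [snd]; ring. Qed.

Lemma orbit_angle_alt k :
  (-1) ^ k * th k = th 0 - rsum 0 k (fun j => (-1) ^ j * betaI d v n itin j).
Proof.
  induction k as [|k IH]; [rewrite rsum_nil by lia; cbn; ring|].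
  rewrite rsum_S, orbit_angle_S by lia; cbn [pow].
  transitivity ((-1) ^ k * th k - (-1) ^ k * betaI d v n itin k); [ring | rewrite IH; ring].
Qed.

Lemma alt_sum_betaI_periodic : th (2 * n) = th 0 ->
  rsum 0 (2 * n) (fun k => (-1) ^ k * betaI d v n itin k) = 0.
Proof.
  intros Hper; pose proof (orbit_angle_alt (2 * n)) as E; rewrite pow_1_even, Hper in E; lra.
Qed.

Hypothesis polygon : simple_ccw_polygon d v.
Hypothesis genuine : forall k, (k < 2 * n)%nat ->
  genuine_step d v (itI n itin k) (itI n itin (S k)) (state d v n itin 1 s k).

Lemma orbit_unit_dir k : (k < 2 * n)%nat ->
  dot (unit_dir d v (itI n itin k)) (unit_dir d v (itI n itin k)) = 1 /\
  dot (unit_dir d v (itI n itin (S k))) (unit_dir d v (itI n itin (S k))) = 1.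
Proof.
  intros Hk; destruct (genuine k Hk) as (Hi & Hj & _), polygon as (_ & Hv & _).
  split; apply unit_dir_unit, Hv; assumption.
Qed.

Lemma orbit_cos_pos k : (k < 2 * n)%nat ->
  0 < cos (th k) /\ 0 < cos (betaI d v n itin k - th k).
Proof.
  intros Hk; destruct (genuine k Hk) as (_ & _ & _ & _ & Hth & Hth' & _).
  split; apply cos_gt_0; apply Hth || apply Hth'.
Qed.

Variable D : R.
Hypothesis theta0_deriv : derivable_pt_lim (theta0 d v n itin) 1 D.

Let dth k := (-1) ^ k * (D + rsum 1 (S k) (fun j => (-1) ^ j * th j)).

Lemma dth_S k : dth (S k) = th (S k) - dth k.
Proof.
  unfold dth; rewrite rsum_S by lia; cbn [pow].
  pose proof (pow_neg1_mul_self (S k)) as E; cbn [pow] in E.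
  transitivity ((-1 * (-1) ^ k) * (-1 * (-1) ^ k) * th (S k) - dth k); [unfold dth; ring|].
  rewrite E; unfold dth; ring.
Qed.

Lemma state_derivable k : (k <= 2 * n)%nat ->
  dpl (fun l => fst (state d v n itin l s k)) 1
      ((-1) ^ k * rsum 0 k (fun i => (-1) ^ i * tl i * dth i) / cos (th k)) /\
  dpl (fun l => snd (state d v n itin l s k)) 1 (dth k).
Proof.
  induction k as [|k IH]; intros Hk.
  - split.
    + rewrite rsum_nil by lia; unfold Rdiv; rewrite Rmult_0_r, Rmult_0_l; exact (dpl_const s 1).
    + eapply dpl_eq; [exact theta0_deriv|]; unfold dth; rewrite rsum_nil by lia; cbn; ring.
  - destruct IH as [IHs IHth]; [lia|].
    destruct (orbit_unit_dir k ltac:(lia)) as [Ui Uj].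
    destruct (orbit_cos_pos k ltac:(lia)) as [Ck Ck'].
    split.
    + eapply dpl_eq.
      { apply (dpl_Phi_ij_fst d v _ _ (fun l => state d v n itin l s k));
          [exact Ui | exact Uj | exact IHs | exact IHth |].
        change (cos (betaI d v n itin k - th k) <> 0); lra. }
      change (snd (state d v n itin 1 s k)) with (th k); fold (tl k).
      change (beta d v (itI n itin k) (itI n itin (S k))) with (betaI d v n itin k).
      rewrite <- orbit_angle_S in Ck' |- *; rewrite rsum_S by lia; cbn [pow].
      set (S_k := rsum 0 k (fun i => (-1) ^ i * tl i * dth i)).
      transitivity ((- ((-1) ^ k * S_k) - ((-1) ^ k * (-1) ^ k) * tl k * dth k) / cos (th (S k))).
      * rewrite pow_neg1_mul_self; field; lra.
      * unfold Rdiv; ring.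
    + eapply dpl_eq.
      * apply (dpl_mult (fun l => l) (fun l => betaI d v n itin k - snd (state d v n itin l s k))).
        -- apply derivable_pt_lim_id.
        -- apply dpl_minus; [apply dpl_const | exact IHth].
      * fold (th k); rewrite dth_S, orbit_angle_S; ring.
Qed.

Lemma F_period_derivative : th (2 * n) = th 0 ->
  dpl (fun lam => F d v n itin (2 * n) s lam) 1
      (rsum 0 (2 * n) (fun i => tl i / cos (th 0) * D) +
       rsum 1 (2 * n) (fun k => (-1) ^ k * th k * rsum k (2 * n) (fun i => tl i / cos (th 0)))).
Proof.
  intros Hper.
  eapply dpl_eq; [apply state_derivable; lia|].
  rewrite Hper, pow_1_even.
  rewrite (rsum_ext_in 0 (2 * n) (fun i => (-1) ^ i * tl i * dth i)
             (fun i => tl i * D + tl i * rsum 1 (S i) (fun j => (-1) ^ j * th j))).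
  2:{ intros i _; unfold dth.
      transitivity (((-1) ^ i * (-1) ^ i) * tl i * (D + rsum 1 (S i) (fun j => (-1) ^ j * th j)));
        [ring | rewrite pow_neg1_mul_self; ring]. }
  rewrite rsum_plus, rsum_triangle_swap.
  unfold Rdiv.
  rewrite (rsum_ext_in 1 (2 * n)
             (fun k => (-1) ^ k * th k * rsum k (2 * n) (fun i => tl i * / cos (th 0)))
             (fun k => (-1) ^ k * th k * rsum k (2 * n) tl * / cos (th 0)))
    by (intros; rewrite rsum_mult_r; ring).
  rewrite !rsum_mult_r; ring.
Qed.
End Orbit.

Theorem lemma3p9 (d : nat) (v : nat -> pt) (n : nat) (itin : nat -> nat) (s : R) :
  simple_ccw_polygon d v ->
  (2 <= n)%nat ->
  (forall k, (k < 2 * n)%nat ->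
     genuine_step d v (itI n itin k) (itI n itin (S k)) (state d v n itin 1 s k)) ->
  state d v n itin 1 s (2 * n) = state d v n itin 1 s 0 ->
  let sk := fun k => fst (state d v n itin 1 s k) in
  let thk := fun k => snd (state d v n itin 1 s k) in
  let t := fun i => tlen d v (itI n itin i) (itI n itin (S i)) (sk i) (thk i) in
  exists D : R,
    derivable_pt_lim (theta0 d v n itin) 1 D /\
    derivable_pt_lim (fun lam => F d v n itin (2 * n) s lam) 1
      (rsum 0 (2 * n) (fun i => t i / cos (thk 0%nat) * D) +
       rsum 1 (2 * n) (fun k => (-1) ^ k * thk k *
                                 rsum k (2 * n) (fun i => t i / cos (thk 0%nat)))).
Proof.
  intros polygon Hn genuine Hper sk thk t.
  assert (Hth : thk (2 * n)%nat = thk 0%nat) by (unfold thk; now rewrite Hper).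
  destruct (theta0_derivable d v n itin ltac:(lia) (alt_sum_betaI_periodic d v n itin s Hth))
    as [D HD].
  exists D; split; [exact HD|].
  exact (F_period_derivative d v n itin s polygon genuine D HD Hth).
Qed.
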